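(* Let $s,t\in\mathbb{R}$ with $s\ne0$, $s^2+4t>0$, let $u\in\mathbb{C}$ and let $v$ be a nonzero number. Then the deformed derivative of the deformed $(s,t)$-exponential function satisfies $$\mathbf{D}_{sv,tv^2}\big(\exp_{s,t}(z,u)\big)=\exp_{s,t}(uvz,u)$$ at every point $z$ at which the series defining $\exp_{s,t}(\cdot,u)$ converges at $v\varphi_{s,t}z$ and $v\varphi'_{s,t}z$ (with the value $f'(0)$ at $z=0$).
   Context: $\varphi_{s,t}=\frac{s+\sqrt{s^2+4t}}{2}$, $\varphi'_{s,t}=\frac{s-\sqrt{s^2+4t}}{2}$. Generalized Fibonacci polynomials: $\{0\}_{s,t}=0$, $\{1\}_{s,t}=1$, $\{n+2\}_{s,t}=s\{n+1\}_{s,t}+t\{n\}_{s,t}$; Fibotorial $\{n\}_{s,t}!=\prod_{k=1}^n\{k\}_{s,t}$, $\{0\}_{s,t}!=1$. Deformed exponential: $\exp_{s,t}(z,u)=\sum_{n\ge0}u^{\binom n2}z^n/\{n\}_{s,t}!$ for $u\neq0$ and $\exp_{s,t}(z,0)=1+z$. Deformed $(s,t)$-derivative: $(\mathbf{D}_{sv,tv^2}f)(z)=\frac{f(v\varphi_{s,t}z)-f(v\varphi'_{s,t}z)}{v(\varphi_{s,t}-\varphi'_{s,t})z}$ for $z\neq0$, and $(\mathbf{D}_{sv,tv^2}f)(0)=f'(0)$. *)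

From Stdlib Require Import Reals.
From Coquelicot Require Import Coquelicot.
Open Scope R_scope.

Definition phi (s t : R) : R := (s + sqrt (s ^ 2 + 4 * t)) / 2.
Definition phi' (s t : R) : R := (s - sqrt (s ^ 2 + 4 * t)) / 2.

Fixpoint fibst (s t : R) (n : nat) : R :=
  match n with
  | O => 0
  | S O => 1
  | S ((S m) as k) => s * fibst s t k + t * fibst s t m
  end.

Fixpoint fibfact (s t : R) (n : nat) : R :=
  match n with
  | O => 1
  | S m => fibst s t (S m) * fibfact s t m
  end.

Definition binom2 (n : nat) : nat := (n * (n - 1) / 2)%nat.

Definition exp_term (s t : R) (u z : Complex.C) (n : nat) : Complex.C :=
  Cdiv (Cmult (Cpow u (binom2 n)) (Cpow z n)) (RtoC (fibfact s t n)).

(* sum of a complex series (componentwise Series; equals the true sum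
   whenever the series converges) *)
Definition CSeries (a : nat -> Complex.C) : Complex.C :=
  (Series (fun n => fst (a n)), Series (fun n => snd (a n))).

Definition exp_st (s t : R) (z u : Complex.C) : Complex.C :=
  match Req_EM_T (fst u) 0, Req_EM_T (snd u) 0 with
  | left _, left _ => Cplus (RtoC 1) z
  | _, _ => CSeries (exp_term s t u z)
  end.

(* "l is the value of (D_{sv,tv^2} f)(z)": the deformed (s,t)-derivative,
   with value f'(0) (complex derivative) at z = 0. *)
Definition is_deformed_deriv (s t : R) (v : Complex.C)
  (f : Complex.C -> Complex.C) (z l : Complex.C) : Prop :=
  (z <> RtoC 0 ->
     l = Cdiv (Cminus (f (Cmult (Cmult v (RtoC (phi s t))) z))
                      (f (Cmult (Cmult v (RtoC (phi' s t))) z)))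
              (Cmult (Cmult v (RtoC (phi s t - phi' s t))) z)) /\
  (z = RtoC 0 -> @is_derive C_AbsRing C_NormedModule f z l).

(* Since binom(n+1,2) = binom(n,2) + n and, by Binet, {n+1} (phi - phi') =
   phi^(n+1) - phi'^(n+1), the n-th term of exp_{s,t}(u w, u) is the divided
   difference of the (n+1)-st terms of exp_{s,t}(phi w, u) and exp_{s,t}(phi' w, u);
   summing gives the claim for z <> 0 (with w = v z).

   At z = 0 the claim is f'(0) = 1 for f(w) = exp_{s,t}(w, u).  The series need
   not converge, but [CSeries] is 0 whenever the partial sums of a real part are
   unbounded, while differentiability keeps f(h) close to f(0) = 1 for small h.
   Evaluating at h = r and h = i r bounds the odd coefficients geometrically, the
   recurrence {n+1} c_(n+1) = u^n c_n passes the bound to all coefficients, so the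
   series converges near 0 and the identity for small w forces f'(0) = f(0). *)

From Stdlib Require Import Reals Lra Lia Psatz Classical FunctionalExtensionality.
From Coquelicot Require Import Coquelicot.
Open Scope R_scope.

Section FibonacciPolynomials.

Variables s t : R.

Lemma fibst_binet (p q : R) (n : nat) :
  p + q = s -> p * q = - t -> fibst s t n * (p - q) = p ^ n - q ^ n.
Proof.
  intros Hsum Hprod.
  enough (H : fibst s t n * (p - q) = p ^ n - q ^ n /\
              fibst s t (S n) * (p - q) = p ^ S n - q ^ S n) by apply H.
  induction n as [|n [IH0 IH1]]; [simpl; split; ring|].
  split; [exact IH1|].
  change (fibst s t (S (S n))) with (s * fibst s t (S n) + t * fibst s t n).
  (* p^(n+2) - q^(n+2) = (p + q)(p^(n+1) - q^(n+1)) - p q (p^n - q^n) *)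
  transitivity (s * (fibst s t (S n) * (p - q)) + t * (fibst s t n * (p - q))); [ring|].
  rewrite IH0, IH1, <- Hsum.
  replace t with (- (p * q)) by lra. simpl; ring.
Qed.

Hypothesis disc_pos : 0 < s ^ 2 + 4 * t.

Lemma phi_add_phi' : phi s t + phi' s t = s.
Proof. unfold phi, phi'; field. Qed.

Lemma phi_mul_phi' : phi s t * phi' s t = - t.
Proof.
  unfold phi, phi'.
  assert (Hsqrt := sqrt_sqrt (s ^ 2 + 4 * t) (Rlt_le _ _ disc_pos)).
  nra.
Qed.

Lemma phi_sub_phi'_gt0 : 0 < phi s t - phi' s t.
Proof.
  replace (phi s t - phi' s t) with (sqrt (s ^ 2 + 4 * t)) by (unfold phi, phi'; field).
  now apply sqrt_lt_R0.
Qed.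

Lemma phi_binet (n : nat) :
  fibst s t n * (phi s t - phi' s t) = phi s t ^ n - phi' s t ^ n.
Proof. apply fibst_binet; [apply phi_add_phi' | apply phi_mul_phi']. Qed.

Hypothesis s_neq0 : s <> 0.

Lemma fibst_neq0 (n : nat) : (1 <= n)%nat -> fibst s t n <> 0.
Proof.
  intros Hn Hfib.
  assert (Hd := phi_sub_phi'_gt0). assert (Hsum := phi_add_phi').
  assert (Hpow := phi_binet n). rewrite Hfib, Rmult_0_l in Hpow.
  set (p := phi s t) in *; set (q := phi' s t) in *.
  destruct (Req_dec q 0) as [Hq|Hq].
  - (* then p = s <> 0, yet p ^ n = 0 *)
    apply (pow_nonzero p n); [lra|]. rewrite Hq, pow_i in Hpow by lia. lra.
  - (* otherwise (p / q) ^ n = 1 forces |p| = |q|, i.e. p = - q and s = 0 *)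
    assert (Hratio : (p / q) ^ n = 1).
    { unfold Rdiv. rewrite Rpow_mult_distr, pow_inv.
      replace (p ^ n) with (q ^ n) by lra. field. now apply pow_nonzero. }
    destruct (pow_R1 _ _ Hratio) as [Habs|]; [|lia].
    rewrite Rabs_div in Habs by exact Hq.
    assert (Hpq : Rabs p = Rabs q).
    { rewrite <- (Rmult_1_l (Rabs q)), <- Habs. field. now apply Rabs_no_R0. }
    revert Hpq. unfold Rabs. destruct (Rcase_abs p), (Rcase_abs q); lra.
Qed.

Lemma fibfact_neq0 (n : nat) : fibfact s t n <> 0.
Proof.
  induction n as [|n IH]; [simpl; lra|].
  change (fibst s t (S n) * fibfact s t n <> 0).
  apply Rmult_integral_contrapositive; split; [apply fibst_neq0; lia | exact IH].
Qed.

End FibonacciPolynomials.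

Lemma fibst_abs_le_pow (s t K : R) (n : nat) :
  1 <= K -> Rabs s + Rabs t <= K -> Rabs (fibst s t n) <= K ^ n.
Proof.
  intros HK1 HK.
  enough (H : Rabs (fibst s t n) <= K ^ n /\ Rabs (fibst s t (S n)) <= K ^ S n) by apply H.
  induction n as [|n [IH0 IH1]]; [simpl; rewrite Rabs_R0, Rabs_R1; lra|].
  split; [exact IH1|].
  change (fibst s t (S (S n))) with (s * fibst s t (S n) + t * fibst s t n).
  assert (Hmono : K ^ n <= K ^ S n) by (apply Rle_pow; [lra | lia]).
  assert (Hs := Rabs_pos s); assert (Ht := Rabs_pos t).
  assert (Hpos := pow_le K (S n) ltac:(lra)).
  eapply Rle_trans; [apply Rabs_triang|]. rewrite !Rabs_mult.
  change (K ^ S (S n)) with (K * K ^ S n).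
  assert (Rabs s * Rabs (fibst s t (S n)) <= Rabs s * K ^ S n) by (apply Rmult_le_compat_l; lra).
  assert (Rabs t * Rabs (fibst s t n) <= Rabs t * K ^ S n) by (apply Rmult_le_compat_l; lra).
  nra.
Qed.

Lemma binom2_S (n : nat) : binom2 (S n) = (binom2 n + n)%nat.
Proof.
  unfold binom2. replace (S n * (S n - 1))%nat with (n * (n - 1) + n * 2)%nat.
  - rewrite Nat.div_add by lia. lia.
  - destruct n; simpl; lia.
Qed.

Definition exp_coef (s t : R) (u : C) (n : nat) : C :=
  (u ^ binom2 n / RtoC (fibfact s t n))%C.

Lemma exp_term_coef (s t : R) (u w : C) (n : nat) :
  exp_term s t u w n = (exp_coef s t u n * w ^ n)%C.
Proof. unfold exp_term, exp_coef, Cdiv. ring. Qed.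

Lemma RtoC_neq0 (x : R) : x <> 0 -> RtoC x <> 0%C.
Proof. intros Hx E. apply Hx, RtoC_inj, E. Qed.

Section ExpCoefficients.

Variables (s t : R) (u : C).
Hypotheses (s_neq0 : s <> 0) (disc_pos : 0 < s ^ 2 + 4 * t).

Lemma exp_coef_S (n : nat) :
  (exp_coef s t u (S n) * RtoC (fibst s t (S n)) = exp_coef s t u n * u ^ n)%C.
Proof.
  assert (Hfact := RtoC_neq0 _ (fibfact_neq0 s t disc_pos s_neq0 n)).
  assert (Hfib := RtoC_neq0 _ (fibst_neq0 s t disc_pos s_neq0 (S n) ltac:(lia))).
  unfold exp_coef. rewrite binom2_S, Cpow_add_r.
  change (fibfact s t (S n)) with (fibst s t (S n) * fibfact s t n).
  rewrite RtoC_mult. field. now split.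
Qed.

Lemma exp_term_secant (w : C) (n : nat) : w <> 0%C ->
  let p := RtoC (phi s t) in let q := RtoC (phi' s t) in
  exp_term s t u (u * w) n =
  ((exp_term s t u (p * w) (S n) - exp_term s t u (q * w) (S n)) / ((p - q) * w))%C.
Proof.
  intros Hw p q.
  assert (Hpq : (p - q)%C <> 0%C)
    by (unfold p, q; rewrite <- RtoC_minus;
        apply RtoC_neq0, Rgt_not_eq, phi_sub_phi'_gt0, disc_pos).
  assert (Hbinet : (RtoC (fibst s t (S n)) * (p - q) = p ^ S n - q ^ S n)%C)
    by (unfold p, q; rewrite <- RtoC_minus, <- RtoC_mult, phi_binet, RtoC_minus, !RtoC_pow
          by exact disc_pos; reflexivity).
  rewrite !exp_term_coef, !Cpow_mult_l, Cmult_assoc, <- exp_coef_S.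
  transitivity (exp_coef s t u (S n) * (RtoC (fibst s t (S n)) * (p - q)) * w ^ S n
                / ((p - q) * w))%C.
  - rewrite Cpow_S. field. now split.
  - rewrite Hbinet. field. now split.
Qed.

End ExpCoefficients.

Lemma is_series_C_components (a : nat -> C) (l : C) :
  @is_series C_AbsRing C_NormedModule a l ->
  is_series (fun n => fst (a n)) (fst l) /\ is_series (fun n => snd (a n)) (snd l).
Proof.
  intros Ha.
  assert (Hpartial : forall n,
            sum_n a n = (sum_n (fun k => fst (a k)) n, sum_n (fun k => snd (a k)) n)).
  { induction n as [|n IH]; [now rewrite !sum_O, <- surjective_pairing|].
    rewrite !sum_Sn, IH. reflexivity. }
  split; apply filterlim_locally; intros eps;
    generalize (proj1 (filterlim_locally (sum_n a) l) Ha eps);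
    apply filter_imp; intros n; rewrite Hpartial; now intros [Hfst Hsnd].
Qed.

Lemma CSeries_correct (a : nat -> C) (l : C) :
  @is_series C_AbsRing C_NormedModule a l -> CSeries a = l.
Proof.
  intros [Hfst Hsnd]%is_series_C_components.
  unfold CSeries. rewrite (is_series_unique _ _ Hfst), (is_series_unique _ _ Hsnd).
  now destruct l.
Qed.

Lemma is_series_C_shift_sub_div (a b : nat -> C) (la lb D : C) :
  @is_series C_AbsRing C_NormedModule a la ->
  @is_series C_AbsRing C_NormedModule b lb -> a 0%nat = b 0%nat ->
  @is_series C_AbsRing C_NormedModule
    (fun n => ((a (S n) - b (S n)) / D)%C) ((la - lb) / D)%C.
Proof.
  intros Ha Hb H0.
  assert (Hshift : forall c l, @is_series C_AbsRing C_NormedModule c l ->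
            @is_series C_AbsRing C_NormedModule (fun n => c (S n)) (l - c 0%nat)%C).
  { intros c l Hc. apply is_series_incr_1. simpl in *.
    match goal with |- is_series _ ?l' => replace l' with l; [exact Hc|] end.
    change (@eq C l (l - c 0%nat + c 0%nat)%C); ring. }
  assert (Hdiff := @is_series_scal_l C_AbsRing C_NormedModule (/ D)%C _ _
                     (is_series_minus _ _ _ _ (Hshift a la Ha) (Hshift b lb Hb))).
  match type of Hdiff with is_series _ ?l => replace ((la - lb) / D)%C with l end.
  - eapply is_series_ext; [|exact Hdiff]. intros n. simpl.
    change ((/ D) * (a (S n) + - b (S n)) = (a (S n) - b (S n)) / D)%C.
    unfold Cdiv. ring.
  - change (/ D * (la - a 0%nat + - (lb - b 0%nat)) = (la - lb) / D)%C.
    rewrite H0. unfold Cdiv. ring.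
Qed.

Lemma CSeries_exp_secant (s t : R) (u w : C) :
  s <> 0 -> 0 < s ^ 2 + 4 * t -> w <> 0%C ->
  let p := RtoC (phi s t) in let q := RtoC (phi' s t) in
  @ex_series C_AbsRing C_NormedModule (exp_term s t u (p * w)) ->
  @ex_series C_AbsRing C_NormedModule (exp_term s t u (q * w)) ->
  CSeries (exp_term s t u (u * w)) =
  ((CSeries (exp_term s t u (p * w)) - CSeries (exp_term s t u (q * w))) / ((p - q) * w))%C.
Proof.
  intros Hs Hdisc Hw p q [la Ha] [lb Hb].
  rewrite (CSeries_correct _ _ Ha), (CSeries_correct _ _ Hb).
  apply CSeries_correct.
  eapply is_series_ext; [|exact (is_series_C_shift_sub_div _ _ _ _ _ Ha Hb eq_refl)].
  intros n. symmetry. now apply exp_term_secant.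
Qed.

Lemma is_derive_C_small_o (f : C -> C) (z0 l : C) :
  @is_derive C_AbsRing C_NormedModule f z0 l ->
  forall eps, 0 < eps -> exists delta, 0 < delta /\ forall h, Cmod h < delta ->
    Cmod (f (z0 + h) - f z0 - h * l)%C <= eps * Cmod h.
Proof.
  intros [_ Hdomin] eps Heps.
  destruct (Hdomin z0 (fun P HP => HP) (mkposreal eps Heps)) as [delta Hdelta].
  exists delta. split; [apply cond_pos|]. intros h Hh.
  replace h with (z0 + h - z0)%C at 2 3 by ring.
  apply (Hdelta (z0 + h)%C).
  change (Cmod (z0 + h - z0)%C < delta). now replace (z0 + h - z0)%C with h by ring.
Qed.

Lemma is_derive_C_continuous (f : C -> C) (z0 l : C) :
  @is_derive C_AbsRing C_NormedModule f z0 l ->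
  forall eps, 0 < eps -> exists delta, 0 < delta /\ forall h, Cmod h < delta ->
    Cmod (f (z0 + h) - f z0)%C < eps.
Proof.
  intros Hder eps Heps.
  destruct (is_derive_C_small_o f z0 l Hder 1 Rlt_0_1) as [delta [Hdelta Hlittle]].
  assert (HL := Cmod_ge_0 l).
  exists (Rmin delta (eps / (1 + Cmod l))). split.
  { apply Rmin_pos; [lra | apply Rdiv_lt_0_compat; lra]. }
  intros h Hh.
  assert (Hh_delta := Rlt_le_trans _ _ _ Hh (Rmin_l _ _)).
  assert (Hh_eps := Rlt_le_trans _ _ _ Hh (Rmin_r _ _)).
  assert (Hlin := Hlittle h Hh_delta).
  replace (f (z0 + h) - f z0)%C with ((f (z0 + h) - f z0 - h * l) + h * l)%C by ring.
  eapply Rle_lt_trans; [apply Cmod_triangle|]. rewrite Cmod_mult.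
  apply (Rmult_lt_compat_r (1 + Cmod l)) in Hh_eps; [|lra].
  replace (eps / (1 + Cmod l) * (1 + Cmod l)) with eps in Hh_eps by (field; lra).
  nra.
Qed.

Lemma is_derive_C_secant (f : C -> C) (l a b : C) :
  a <> b -> @is_derive C_AbsRing C_NormedModule f (RtoC 0) l ->
  forall eps, 0 < eps -> exists delta, 0 < delta /\ forall w : C, w <> 0%C -> Cmod w < delta ->
    Cmod ((f (a * w) - f (b * w)) / ((a - b) * w) - l)%C <= eps.
Proof.
  intros Hab Hder eps Heps.
  assert (Hab' : (a - b)%C <> 0%C)
    by (intros E; apply Hab; replace a with (b + (a - b))%C by ring; rewrite E; ring).
  assert (Hab_pos : 0 < Cmod (a - b)) by now apply Cmod_gt_0.
  assert (Ha := Cmod_ge_0 a). assert (Hb := Cmod_ge_0 b).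
  set (M := Cmod a + Cmod b + 1).
  assert (HM : 1 <= M) by (unfold M; lra).
  destruct (is_derive_C_small_o f (RtoC 0) l Hder (eps * Cmod (a - b) / M)
              ltac:(apply Rdiv_lt_0_compat; nra)) as [delta [Hdelta Hlittle]].
  exists (delta / M). split; [apply Rdiv_lt_0_compat; lra|].
  intros w Hw0 Hw.
  assert (Hwpos : 0 < Cmod w) by now apply Cmod_gt_0.
  assert (HE : forall x, Cmod x <= M ->
            Cmod (f (x * w) - f (RtoC 0) - x * w * l)%C
            <= eps * Cmod (a - b) / M * (Cmod x * Cmod w)).
  { intros x Hx. assert (Hxw := Hlittle (x * w)%C).
    rewrite Cplus_0_l, Cmod_mult in Hxw. apply Hxw.
    apply (Rmult_lt_compat_r M) in Hw; [|lra].
    replace (delta / M * M) with delta in Hw by (field; lra).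
    assert (Hx0 := Cmod_ge_0 x). nra. }
  replace ((f (a * w) - f (b * w)) / ((a - b) * w) - l)%C
    with (((f (a * w) - f (RtoC 0) - a * w * l) + - (f (b * w) - f (RtoC 0) - b * w * l))
          / ((a - b) * w))%C by (field; now split).
  rewrite Cmod_div, Cmod_mult by (apply Cmod_gt_0; rewrite Cmod_mult; nra).
  apply (Rmult_le_reg_r (Cmod (a - b) * Cmod w)); [nra|].
  unfold Rdiv. rewrite Rmult_assoc, Rinv_l, Rmult_1_r by nra.
  eapply Rle_trans; [apply Cmod_triangle|]. rewrite Cmod_opp.
  assert (HEa := HE a ltac:(unfold M; lra)). assert (HEb := HE b ltac:(unfold M; lra)).
  assert (Hfrac : eps * Cmod (a - b) / M * M = eps * Cmod (a - b)) by (field; lra).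
  assert (Hbound : 0 <= eps * Cmod (a - b) / M * Cmod w)
    by (apply Rmult_le_pos; [apply Rdiv_le_0_compat|]; nra).
  unfold M in *. nra.
Qed.

Lemma is_derive_C_secant_identity (f : C -> C) (l a b c : C) (r : R) :
  a <> b -> 0 < r -> @is_derive C_AbsRing C_NormedModule f (RtoC 0) l ->
  (forall w : C, w <> 0%C -> Cmod w < r ->
     f (c * w)%C = ((f (a * w) - f (b * w)) / ((a - b) * w))%C) ->
  l = f 0%C.
Proof.
  intros Hab Hr Hder Hid.
  enough (Hzero : Cmod (f 0%C - l) <= 0).
  { assert (Hd : (f 0%C - l)%C = 0%C)
      by (apply Cmod_eq_0; generalize (Cmod_ge_0 (f 0%C - l)); lra).
    replace l with (f 0%C - (f 0%C - l))%C by ring. rewrite Hd. ring. }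
  apply Rle_plus_epsilon. intros eps Heps. rewrite Rplus_0_l.
  destruct (is_derive_C_secant f l a b Hab Hder (eps / 2) ltac:(lra))
    as [delta1 [Hdelta1 Hsecant]].
  destruct (is_derive_C_continuous f (RtoC 0) l Hder (eps / 2) ltac:(lra))
    as [delta2 [Hdelta2 Hcont]].
  assert (Hc := Cmod_ge_0 c).
  set (rho := Rmin (Rmin r delta1) (delta2 / (Cmod c + 1)) / 2).
  assert (Hmin : 0 < Rmin (Rmin r delta1) (delta2 / (Cmod c + 1)))
    by (apply Rmin_pos; [apply Rmin_pos | apply Rdiv_lt_0_compat]; lra).
  assert (Hmin_r := Rle_trans _ _ _ (Rmin_l _ (delta2 / (Cmod c + 1))) (Rmin_l r delta1)).
  assert (Hmin_delta1 := Rle_trans _ _ _ (Rmin_l _ (delta2 / (Cmod c + 1))) (Rmin_r r delta1)).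
  assert (Hmin_delta2 := Rmin_r (Rmin r delta1) (delta2 / (Cmod c + 1))).
  assert (Hw : Cmod (RtoC rho) = rho) by (rewrite Cmod_R; apply Rabs_pos_eq; unfold rho; lra).
  assert (Hw0 : RtoC rho <> 0%C) by (apply Cmod_gt_0; rewrite Hw; unfold rho; lra).
  assert (Hcw : Cmod (c * RtoC rho) < delta2).
  { rewrite Cmod_mult, Hw.
    apply (Rmult_le_compat_r (Cmod c + 1)) in Hmin_delta2; [|lra].
    replace (delta2 / (Cmod c + 1) * (Cmod c + 1)) with delta2 in Hmin_delta2 by (field; lra).
    unfold rho. nra. }
  replace (f 0%C - l)%C with (- (f (0 + c * RtoC rho) - f 0%C)
                             + ((f (a * RtoC rho) - f (b * RtoC rho)) / ((a - b) * RtoC rho) - l))%C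
    by (rewrite Cplus_0_l, <- Hid by (try exact Hw0; rewrite Hw; unfold rho; lra); ring).
  eapply Rle_trans; [apply Cmod_triangle|]. rewrite Cmod_opp.
  assert (Hf := Hcont _ Hcw).
  assert (Hs := Hsecant (RtoC rho) Hw0 ltac:(rewrite Hw; unfold rho; lra)).
  lra.
Qed.

(* [Series] returns the junk value 0 unless the partial sums have finite
   lim sup and lim inf, in which case they are eventually bounded. *)
Lemma Series_neq0_bounded (x : nat -> R) :
  Series x <> 0 -> exists N M, forall n, (N <= n)%nat -> Rabs (x n) <= M.
Proof.
  intros Hx. unfold Series, Lim_seq in Hx.
  destruct (ex_LimSup_seq (sum_n x)) as [ls Hls].
  destruct (ex_LimInf_seq (sum_n x)) as [li Hli].
  rewrite (is_LimSup_seq_unique _ _ Hls), (is_LimInf_seq_unique _ _ Hli) in Hx.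
  destruct ls as [ls| |], li as [li| |]; simpl in Hx; try lra.
  destruct (proj2 (Hls (mkposreal 1 Rlt_0_1))) as [N1 Hsup].
  destruct (proj2 (Hli (mkposreal 1 Rlt_0_1))) as [N2 Hinf].
  simpl in Hsup, Hinf.
  exists (S (Nat.max N1 N2)), (ls - li + 2). intros [|n] Hn; [lia|].
  assert (Hterm : x (S n) = sum_n x (S n) - sum_n x n)
    by (rewrite sum_Sn; change (x (S n) = sum_n x n + x (S n) - sum_n x n); ring).
  rewrite Hterm.
  assert (Hs1 := Hsup (S n) ltac:(lia)). assert (Hs0 := Hsup n ltac:(lia)).
  assert (Hi1 := Hinf (S n) ltac:(lia)). assert (Hi0 := Hinf n ltac:(lia)).
  apply Rabs_le. lra.
Qed.

Lemma Cmod_le_Rabs_re_im (x : C) : Cmod x <= Rabs (fst x) + Rabs (snd x).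
Proof.
  destruct x as [a b]. cbn [fst snd].
  assert (Hsplit : (a, b) = (RtoC a + Ci * RtoC b)%C)
    by (unfold Ci; apply injective_projections; simpl; ring).
  rewrite Hsplit at 1.
  eapply Rle_trans; [apply Cmod_triangle|].
  rewrite Cmod_mult, Cmod_Ci, !Cmod_R. lra.
Qed.

Lemma Rabs_re_mul_Ci_pow_odd (x : C) (n : nat) :
  Nat.Odd n -> Rabs (fst (x * Ci ^ n)%C) = Rabs (snd x).
Proof.
  intros [m ->].
  assert (Hpow : (Ci ^ (2 * m + 1))%C = (0, (-1) ^ m)).
  { induction m as [|m IH]; [unfold Ci; simpl; apply injective_projections; simpl; ring|].
    replace (2 * S m + 1)%nat with (S (S (2 * m + 1))) by lia.
    rewrite !Cpow_S, IH. unfold Ci. apply injective_projections; simpl; ring. }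
  rewrite Hpow. destruct x as [a b]. simpl.
  replace (a * 0 - b * (-1) ^ m) with (- (b * (-1) ^ m)) by ring.
  now rewrite Rabs_Ropp, Rabs_mult, pow_1_abs, Rmult_1_r.
Qed.

(* Real parts along the rays [r] and [i r] control [Re] and [Im] of the odd
   terms [c n * r ^ n]. *)
Lemma odd_coef_bound (c : nat -> C) (r : R) : 0 <= r ->
  Series (fun n => fst (c n * RtoC r ^ n)%C) <> 0 ->
  Series (fun n => fst (c n * (Ci * RtoC r) ^ n)%C) <> 0 ->
  exists N M, forall n, (N <= n)%nat -> Nat.Odd n -> Cmod (c n) * r ^ n <= M.
Proof.
  intros Hr Hre Him.
  destruct (Series_neq0_bounded _ Hre) as [N1 [M1 HM1]].
  destruct (Series_neq0_bounded _ Him) as [N2 [M2 HM2]].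
  exists (Nat.max N1 N2), (M1 + M2). intros n Hn Hodd.
  assert (Hre_n := HM1 n ltac:(lia)). assert (Him_n := HM2 n ltac:(lia)).
  replace (c n * (Ci * RtoC r) ^ n)%C with ((c n * RtoC r ^ n) * Ci ^ n)%C in Him_n
    by (rewrite Cpow_mult_l; ring).
  rewrite Rabs_re_mul_Ci_pow_odd in Him_n by exact Hodd.
  assert (Hmod : Cmod (c n * RtoC r ^ n)%C = Cmod (c n) * r ^ n)
    by (rewrite Cmod_mult, Cmod_pow, Cmod_R, Rabs_pos_eq by exact Hr; reflexivity).
  rewrite <- Hmod. eapply Rle_trans; [apply Cmod_le_Rabs_re_im|]. lra.
Qed.

(* From [|c_n| |u|^n = |c_(n+1)| |{n+1}|] and [|{n}| <= K^n]. *)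
Lemma exp_coef_le_next (s t : R) (u : C) (K r : R) (n : nat) :
  s <> 0 -> 0 < s ^ 2 + 4 * t -> 1 <= K -> Rabs s + Rabs t <= K -> 0 < r ->
  Cmod (exp_coef s t u n) * (r / K * Cmod u) ^ n
  <= Cmod (exp_coef s t u (S n)) * r ^ S n * (K / r).
Proof.
  intros Hs Hdisc HK1 HK Hr. set (c := exp_coef s t u).
  assert (Hrec : Cmod (c n) * Cmod u ^ n = Cmod (c (S n)) * Rabs (fibst s t (S n)))
    by (rewrite <- Cmod_pow, <- Cmod_mult, <- Cmod_R, <- Cmod_mult; unfold c;
        now rewrite exp_coef_S).
  assert (Hscale : K ^ S n * (r / K) ^ n = r ^ S n * (K / r)).
  { unfold Rdiv. rewrite Rpow_mult_distr, pow_inv. simpl. field.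
    repeat split; try apply pow_nonzero; lra. }
  rewrite Rmult_assoc, <- Hscale, Rpow_mult_distr.
  replace (Cmod (c n) * ((r / K) ^ n * Cmod u ^ n))
    with (Cmod (c (S n)) * Rabs (fibst s t (S n)) * (r / K) ^ n) by (rewrite <- Hrec; ring).
  rewrite <- Rmult_assoc.
  apply Rmult_le_compat_r; [apply pow_le, Rdiv_le_0_compat; lra|].
  apply Rmult_le_compat_l; [apply Cmod_ge_0 | now apply fibst_abs_le_pow].
Qed.

Lemma exp_coef_geometric_bound (s t : R) (u : C) (r : R) (N : nat) (M : R) :
  s <> 0 -> 0 < s ^ 2 + 4 * t -> u <> 0%C -> 0 < r ->
  (forall n, (N <= n)%nat -> Nat.Odd n -> Cmod (exp_coef s t u n) * r ^ n <= M) ->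
  exists rho M', 0 < rho /\
    forall n, (N <= n)%nat -> Cmod (exp_coef s t u n) * rho ^ n <= M'.
Proof.
  intros Hs Hdisc Hu Hr HM.
  assert (Hu_pos : 0 < Cmod u) by now apply Cmod_gt_0.
  assert (Hs_abs := Rabs_pos s). assert (Ht_abs := Rabs_pos t).
  set (K := 1 + Rabs s + Rabs t + Cmod u).
  assert (HK1 : 1 <= K) by (unfold K; lra).
  assert (HK : Rabs s + Rabs t <= K) by (unfold K; lra).
  assert (HuK : Cmod u <= K) by (unfold K; lra).
  assert (HrK : 0 <= r / K) by (apply Rdiv_le_0_compat; lra).
  exists (r / K * Cmod u), (Rabs M * (1 + K / r)). split.
  { apply Rmult_lt_0_compat; [apply Rdiv_lt_0_compat|]; lra. }
  assert (HMabs := Rle_abs M). assert (HMpos := Rabs_pos M).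
  assert (HKr : 0 <= K / r) by (apply Rdiv_le_0_compat; lra).
  intros n Hn. assert (Hc0 := Cmod_ge_0 (exp_coef s t u n)).
  destruct (Nat.Even_or_Odd n) as [Heven|Hodd].
  - assert (Hodd : Nat.Odd (S n)) by (destruct Heven as [m ->]; exists m; lia).
    assert (Hnext := HM (S n) ltac:(lia) Hodd).
    assert (Hstep := exp_coef_le_next s t u K r n Hs Hdisc HK1 HK Hr).
    nra.
  - assert (Hratio : (r / K * Cmod u) ^ n <= r ^ n).
    { apply pow_incr. split; [apply Rmult_le_pos; [lra | apply Cmod_ge_0]|].
      assert (r / K * K = r) by (field; lra). nra. }
    assert (Cmod (exp_coef s t u n) * (r / K * Cmod u) ^ n <= Cmod (exp_coef s t u n) * r ^ n)
      by (now apply Rmult_le_compat_l).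
    assert (HM1 := HM n Hn Hodd). nra.
Qed.

Lemma ex_series_C_geometric_bound (c : nat -> C) (rho M : R) (N : nat) :
  0 < rho -> (forall n, (N <= n)%nat -> Cmod (c n) * rho ^ n <= M) ->
  forall h, Cmod h < rho -> @ex_series C_AbsRing C_NormedModule (fun n => c n * h ^ n)%C.
Proof.
  intros Hrho HM h Hh.
  set (q := Cmod h / rho).
  assert (Hq : 0 <= q < 1).
  { assert (Hh0 := Cmod_ge_0 h). unfold q. split; [apply Rdiv_le_0_compat; lra|].
    apply (Rmult_lt_reg_r rho); [lra|]. unfold Rdiv. rewrite Rmult_assoc, Rinv_l; lra. }
  apply (proj2 (ex_series_incr_n _ N)).
  apply (@ex_series_le C_AbsRing C_CompleteNormedModule _ (fun k => Rabs M * q ^ N * q ^ k)).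
  - intros k. change (Cmod (c (N + k)%nat * h ^ (N + k))%C <= Rabs M * q ^ N * q ^ k).
    rewrite Cmod_mult, Cmod_pow, Rmult_assoc, <- pow_add.
    replace (Cmod h) with (rho * q) by (unfold q; field; lra).
    rewrite Rpow_mult_distr, <- Rmult_assoc.
    apply Rmult_le_compat_r; [apply pow_le; lra|].
    eapply Rle_trans; [apply HM; lia | apply Rle_abs].
  - apply (ex_series_ext (fun k => scal (Rabs M * q ^ N) (q ^ k))); [reflexivity|].
    apply (@ex_series_scal_l R_AbsRing R_NormedModule), ex_series_geom.
    rewrite Rabs_pos_eq; lra.
Qed.

Lemma CSeries_exp_term_0 (s t : R) (u : C) : CSeries (exp_term s t u 0%C) = 1%C.
Proof.
  apply CSeries_correct.
  apply (filterlim_ext (fun _ : nat => RtoC 1)); [|apply filterlim_const].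
  intros n; induction n as [|n IH].
  - rewrite sum_O. unfold exp_term. simpl. field.
  - rewrite sum_Sn, <- IH. unfold exp_term. rewrite Cpow_S.
    change (@eq C 1 (1 + u ^ binom2 (S n) * (0 * 0 ^ n) / RtoC (fibfact s t (S n)))%C).
    unfold Cdiv. ring.
Qed.

(* The derivative is only used to keep the real parts of the sums near 1, away
   from the junk value 0 that [Series] takes on unbounded partial sums. *)
Lemma exp_series_converges_near_0 (s t : R) (u l : C) :
  s <> 0 -> 0 < s ^ 2 + 4 * t -> u <> 0%C ->
  @is_derive C_AbsRing C_NormedModule (fun w => CSeries (exp_term s t u w)) (RtoC 0) l ->
  exists rho, 0 < rho /\ forall h, Cmod h < rho ->
    @ex_series C_AbsRing C_NormedModule (exp_term s t u h).
Proof.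
  intros Hs Hdisc Hu Hder.
  destruct (is_derive_C_continuous _ (RtoC 0) l Hder 1 Rlt_0_1) as [delta [Hdelta Hnear]].
  assert (Hre : forall h, Cmod h < delta ->
            Series (fun n => fst (exp_coef s t u n * h ^ n)%C) <> 0).
  { intros h Hh HS. specialize (Hnear h Hh).
    rewrite Cplus_0_l, CSeries_exp_term_0 in Hnear.
    assert (Hreal := re_le_Cmod (CSeries (exp_term s t u h) - 1)%C).
    change (Rabs (Series (fun n => fst (exp_term s t u h n)) - 1)
            <= Cmod (CSeries (exp_term s t u h) - 1)%C) in Hreal.
    rewrite (Series_ext _ (fun n => fst (exp_coef s t u n * h ^ n)%C)) in Hreal
      by (intros n; now rewrite exp_term_coef).
    rewrite HS, Rminus_0_l, Rabs_Ropp, Rabs_R1 in Hreal. lra. }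
  assert (Hr : Cmod (RtoC (delta / 2)) = delta / 2)
    by (rewrite Cmod_R; apply Rabs_pos_eq; lra).
  destruct (odd_coef_bound (exp_coef s t u) (delta / 2) ltac:(lra)) as [N [M HM]].
  { apply Hre. lra. }
  { apply Hre. rewrite Cmod_mult, Cmod_Ci. lra. }
  destruct (exp_coef_geometric_bound s t u (delta / 2) N M Hs Hdisc Hu ltac:(lra) HM)
    as [rho [M' [Hrho HM']]].
  exists rho. split; [exact Hrho|]. intros h Hh.
  eapply ex_series_ext; [|exact (ex_series_C_geometric_bound _ _ _ _ Hrho HM' h Hh)].
  intros n. now rewrite exp_term_coef.
Qed.

Lemma exp_series_derive_0 (s t : R) (u l : C) :
  s <> 0 -> 0 < s ^ 2 + 4 * t -> u <> 0%C ->
  @is_derive C_AbsRing C_NormedModule (fun w => CSeries (exp_term s t u w)) (RtoC 0) l ->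
  l = 1%C.
Proof.
  intros Hs Hdisc Hu Hder.
  destruct (exp_series_converges_near_0 s t u l Hs Hdisc Hu Hder) as [rho [Hrho Hconv]].
  set (P := Cmod (RtoC (phi s t)) + Cmod (RtoC (phi' s t)) + 1).
  assert (Hphi : Cmod (RtoC (phi s t)) < P)
    by (unfold P; generalize (Cmod_ge_0 (RtoC (phi' s t))); lra).
  assert (Hphi' : Cmod (RtoC (phi' s t)) < P)
    by (unfold P; generalize (Cmod_ge_0 (RtoC (phi s t))); lra).
  assert (HP : 0 < P) by (generalize (Cmod_ge_0 (RtoC (phi s t))); lra).
  rewrite <- (CSeries_exp_term_0 s t u).
  apply (is_derive_C_secant_identity (fun w => CSeries (exp_term s t u w)) l
           (phi s t) (phi' s t) u (rho / P)).
  - intros E. apply RtoC_inj in E. generalize (phi_sub_phi'_gt0 s t Hdisc). lra.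
  - now apply Rdiv_lt_0_compat.
  - exact Hder.
  - intros w Hw0 Hw.
    assert (Hsmall : forall x, Cmod x < P -> Cmod (x * w)%C < rho).
    { intros x Hx. rewrite Cmod_mult.
      apply (Rmult_lt_compat_r P) in Hw; [|lra].
      replace (rho / P * P) with rho in Hw by (field; lra).
      assert (Hw_pos := Cmod_ge_0 w). nra. }
    apply CSeries_exp_secant; auto; now apply Hconv, Hsmall.
Qed.

Lemma exp_st_u0 (s t : R) (z : C) : exp_st s t z 0%C = (1 + z)%C.
Proof.
  unfold exp_st. simpl.
  destruct (Req_EM_T 0 0) as [_|H]; [|now contradiction H].
  reflexivity.
Qed.

Lemma exp_st_neq0 (s t : R) (z u : C) :
  u <> 0%C -> exp_st s t z u = CSeries (exp_term s t u z).
Proof.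
  intros Hu. unfold exp_st.
  destruct (Req_EM_T (fst u) 0), (Req_EM_T (snd u) 0); try reflexivity.
  exfalso. apply Hu. destruct u as [a b]. simpl in *. now subst.
Qed.

Lemma deformed_deriv_1_plus_id (s t : R) (v z : C) :
  0 < s ^ 2 + 4 * t -> v <> 0%C ->
  is_deformed_deriv s t v (fun w => 1 + w)%C z (1 + 0 * v * z)%C.
Proof.
  intros Hdisc Hv.
  assert (Hphi : RtoC (phi s t - phi' s t) <> 0%C)
    by (apply RtoC_neq0, Rgt_not_eq, phi_sub_phi'_gt0, Hdisc).
  split.
  - intros Hz. rewrite RtoC_minus in Hphi |- *. field. now repeat split.
  - intros ->.
    split; [apply is_linear_scal_l|].
    intros x _ eps. apply filter_forall. intros y.
    change (Cmod (1 + y + - (1 + x) + - ((y + - x) * (1 + 0 * v * 0)))%C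
            <= eps * Cmod (y + - x)%C).
    replace (1 + y + - (1 + x) + - ((y + - x) * (1 + 0 * v * 0)))%C with (RtoC 0) by ring.
    rewrite Cmod_0. apply Rmult_le_pos; [apply Rlt_le, cond_pos | apply Cmod_ge_0].
Qed.

Lemma exp_series_deformed_deriv (s t : R) (u v z : C) :
  s <> 0 -> 0 < s ^ 2 + 4 * t -> u <> 0%C -> v <> 0%C ->
  @ex_series C_AbsRing C_NormedModule (exp_term s t u (v * RtoC (phi s t) * z)%C) ->
  @ex_series C_AbsRing C_NormedModule (exp_term s t u (v * RtoC (phi' s t) * z)%C) ->
  (z = RtoC 0 ->
     @ex_derive C_AbsRing C_NormedModule (fun w => CSeries (exp_term s t u w)) z) ->
  is_deformed_deriv s t v (fun w => CSeries (exp_term s t u w)) z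
    (CSeries (exp_term s t u (u * v * z)%C)).
Proof.
  intros Hs Hdisc Hu Hv Hphi Hphi' Hder. split.
  - intros Hz.
    assert (Hvz : (v * z)%C <> 0%C)
      by (apply Cmod_gt_0; rewrite Cmod_mult; apply Rmult_lt_0_compat; now apply Cmod_gt_0).
    rewrite RtoC_minus.
    replace (v * RtoC (phi s t) * z)%C with (RtoC (phi s t) * (v * z))%C in * by ring.
    replace (v * RtoC (phi' s t) * z)%C with (RtoC (phi' s t) * (v * z))%C in * by ring.
    replace (v * (RtoC (phi s t) - RtoC (phi' s t)) * z)%C
      with ((RtoC (phi s t) - RtoC (phi' s t)) * (v * z))%C by ring.
    replace (u * v * z)%C with (u * (v * z))%C by ring.
    now apply CSeries_exp_secant.
  - intros ->. destruct (Hder eq_refl) as [l Hl].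
    replace (u * v * 0)%C with (RtoC 0) by ring.
    rewrite CSeries_exp_term_0, <- (exp_series_derive_0 s t u l Hs Hdisc Hu Hl).
    exact Hl.
Qed.

Theorem mainTheorem8 (s t : R) (u v : Complex.C) :
  s <> 0 -> 0 < s ^ 2 + 4 * t -> v <> RtoC 0 ->
  forall z : Complex.C,
    @ex_series C_AbsRing C_NormedModule
      (exp_term s t u (Cmult (Cmult v (RtoC (phi s t))) z)) ->
    @ex_series C_AbsRing C_NormedModule
      (exp_term s t u (Cmult (Cmult v (RtoC (phi' s t))) z)) ->
    (z = RtoC 0 -> @ex_derive C_AbsRing C_NormedModule (fun w => exp_st s t w u) z) ->
    is_deformed_deriv s t v (fun w => exp_st s t w u) z
      (exp_st s t (Cmult (Cmult u v) z) u).
Proof.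
  intros Hs Hdisc Hv z Hphi Hphi' Hder.
  destruct (classic (u = 0%C)) as [-> | Hu].
  - rewrite exp_st_u0.
    replace (fun w => exp_st s t w 0%C) with (fun w => 1 + w)%C
      by (apply functional_extensionality; intros w; now rewrite exp_st_u0).
    now apply deformed_deriv_1_plus_id.
  - rewrite exp_st_neq0 by exact Hu.
    replace (fun w => exp_st s t w u) with (fun w => CSeries (exp_term s t u w))
      by (apply functional_extensionality; intros w; now rewrite exp_st_neq0).
    apply exp_series_deformed_deriv; try assumption.
    intros Hz. destruct (Hder Hz) as [l Hl]. exists l.
    eapply is_derive_ext; [|exact Hl]. intros w. now apply exp_st_neq0.
Qed.
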